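(* There exists an infinite class of 4-planar graphs such that no graph $G$ in the class admits a planar octilinear drawing without bends, and every planar octilinear drawing of a graph $G$ with $n$ vertices in the class having at most one bend per edge has $\Omega(n)$ bends in total.
   Context: A $k$-planar graph is a planar graph in which every vertex has degree at most $k$. An octilinear drawing of a graph places every vertex on a point of the integer grid and draws every edge as a polyline consisting of horizontal, vertical and diagonal (slope $\pm 1$) line segments; a bend is a point of an edge where two consecutive segments of different slopes meet. The drawing is planar if no two edges cross. *)

From mathcomp Require Import all_boot.
From Stdlib Require Import Reals ZArith.

Set Implicit Arguments.
Unset Strict Implicit.
Unset Printing Implicit Defensive.

Definition simple_graph (n : nat) (e : rel 'I_n) : Prop :=
  (forall u v, e u v = e v u) /\ (forall u, ~~ e u u).

Definition deg (n : nat) (e : rel 'I_n) (u : 'I_n) : nat := #|[set v | e u v]|.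

Definition pt := (R * R)%type.
Definition pt0 : pt := (0%R, 0%R).

Definition on_seg (a b x : pt) : Prop :=
  exists t : R, (0 <= t <= 1)%R /\
    x = (a.1 + t * (b.1 - a.1), a.2 + t * (b.2 - a.2))%R.

(* A polyline is the list of its points (endpoints and intermediate points). *)
Definition pnth (p : seq pt) (i : nat) : pt := nth pt0 p i.

Definition on_polyline (p : seq pt) (x : pt) : Prop :=
  exists i, i.+1 < size p /\ on_seg (pnth p i) (pnth p i.+1) x.

Definition simple_polyline (p : seq pt) : Prop :=
  (forall i, i.+1 < size p -> pnth p i <> pnth p i.+1) /\
  (forall i j x, i < j -> j.+1 < size p ->
     on_seg (pnth p i) (pnth p i.+1) x -> on_seg (pnth p j) (pnth p j.+1) x ->
     j = i.+1 /\ x = pnth p j).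

Definition octilinear_seg (a b : pt) : Prop :=
  let dx := (b.1 - a.1)%R in let dy := (b.2 - a.2)%R in
  dx = 0%R \/ dy = 0%R \/ dx = dy \/ dx = (- dy)%R.

(* consecutive segments [a,q] and [q,b] have different slopes *)
Definition is_bend (a q b : pt) : bool :=
  if Req_EM_T ((q.1 - a.1) * (b.2 - q.2) - (q.2 - a.2) * (b.1 - q.1))%R 0%R
  then false else true.

Definition bends (p : seq pt) : nat :=
  count (fun i => is_bend (pnth p i.-1) (pnth p i) (pnth p i.+1))
        (iota 1 (size p).-2).

(* pos: vertex positions; route u v: intermediate points of the polyline of
   the edge {u,v}, drawn from u to v, used for u < v. *)
Record drawing (n : nat) := Drawing {
  pos : 'I_n -> pt;
  route : 'I_n -> 'I_n -> seq pt }.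

Definition edge_poly n (d : drawing n) (u v : 'I_n) : seq pt :=
  pos d u :: route d u v ++ [:: pos d v].

Definition is_edge n (e : rel 'I_n) (u v : 'I_n) : bool := (u < v) && e u v.

Definition planar_drawing n (e : rel 'I_n) (d : drawing n) : Prop :=
  injective (pos d) /\
  (forall u v, is_edge e u v -> simple_polyline (edge_poly d u v)) /\
  (forall u v w, is_edge e u v -> w <> u -> w <> v ->
      ~ on_polyline (edge_poly d u v) (pos d w)) /\
  (forall u v u' v' x, is_edge e u v -> is_edge e u' v' -> (u, v) <> (u', v') ->
      on_polyline (edge_poly d u v) x -> on_polyline (edge_poly d u' v') x ->
      exists w, (w = u \/ w = v) /\ (w = u' \/ w = v') /\ x = pos d w).

Definition planar n (e : rel 'I_n) : Prop := exists d : drawing n, planar_drawing e d.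

Definition k_planar (k : nat) n (e : rel 'I_n) : Prop :=
  planar e /\ forall u, deg e u <= k.

Definition planar_octilinear_drawing n (e : rel 'I_n) (d : drawing n) : Prop :=
  planar_drawing e d /\
  (forall v, exists a b : Z, pos d v = (IZR a, IZR b)) /\
  (forall u v, is_edge e u v -> forall i, i.+1 < size (edge_poly d u v) ->
      octilinear_seg (pnth (edge_poly d u v) i) (pnth (edge_poly d u v) i.+1)).

Definition edge_bends n (d : drawing n) (u v : 'I_n) : nat := bends (edge_poly d u v).

Definition total_bends n (e : rel 'I_n) (d : drawing n) : nat :=
  \sum_(u < n) \sum_(v < n | is_edge e u v) edge_bends d u v.

(* Disjoint unions of copies of K4 form the class.  A bendless edge of an
   octilinear drawing is a straight segment of one of four slopes, so a copy of
   K4 without bends would be a planar straight-line drawing of K4 with four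
   slopes.  Edges sharing an endpoint span a nondegenerate triangle and are not
   parallel, so among the six edges two of the three pairs of opposite edges are
   parallel: the four points form a parallelogram, whose diagonals, the third
   pair of opposite edges, cross.  Hence every copy carries a bend, and a graph
   of the class with n vertices has at least n/4 bends. *)

From Pilot Require Import Defs.
From mathcomp Require Import all_boot zify.
From Stdlib Require Import Reals Lra.

Set Implicit Arguments.
Unset Strict Implicit.
Unset Printing Implicit Defensive.

(* [pos] is also the projection of [posreal]. *)
Local Notation pos := Defs.pos.

(** * Straight-line octilinear drawings of K4 *)

Definition wedge (a b c d : pt) : R :=
  ((b.1 - a.1) * (d.2 - c.2) - (b.2 - a.2) * (d.1 - c.1))%R.

Lemma sub_pt_neq0 (a b : pt) : a <> b -> (b.1 - a.1 <> 0 \/ b.2 - a.2 <> 0)%R.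
Proof.
case: a b => [a1 a2] [b1 b2] /= hab.
case: (Req_dec (b1 - a1) 0) => h1; last by left.
case: (Req_dec (b2 - a2) 0) => h2; last by right.
by case: hab; f_equal; lra.
Qed.

Lemma wedge_revr (a b c d : pt) : wedge a b d c = (- wedge a b c d)%R.
Proof. by rewrite /wedge; ring. Qed.

Lemma wedge_addr (a b c d f : pt) :
  (wedge a b c d + wedge a b d f)%R = wedge a b c f.
Proof. by rewrite /wedge; ring. Qed.

Lemma wedge_trans (a b c d f g : pt) : c <> d ->
  wedge a b c d = 0%R -> wedge c d f g = 0%R -> wedge a b f g = 0%R.
Proof.
move/sub_pt_neq0; rewrite /wedge => -[h|h] e1 e2.
- apply: (Rmult_eq_reg_l (d.1 - c.1)) => //; rewrite Rmult_0_r.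
  have -> : ((d.1 - c.1) * ((b.1 - a.1) * (g.2 - f.2) - (b.2 - a.2) * (g.1 - f.1)) =
    (b.1 - a.1) * ((d.1 - c.1) * (g.2 - f.2) - (d.2 - c.2) * (g.1 - f.1)) +
    (g.1 - f.1) * ((b.1 - a.1) * (d.2 - c.2) - (b.2 - a.2) * (d.1 - c.1)))%R by ring.
  by rewrite e1 e2; ring.
- apply: (Rmult_eq_reg_l (d.2 - c.2)) => //; rewrite Rmult_0_r.
  have -> : ((d.2 - c.2) * ((b.1 - a.1) * (g.2 - f.2) - (b.2 - a.2) * (g.1 - f.1)) =
    (b.2 - a.2) * ((d.1 - c.1) * (g.2 - f.2) - (d.2 - c.2) * (g.1 - f.1)) +
    (g.2 - f.2) * ((b.1 - a.1) * (d.2 - c.2) - (b.2 - a.2) * (d.1 - c.1)))%R by ring.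
  by rewrite e1 e2; ring.
Qed.

Definition along (a b : pt) (t : R) : pt :=
  (a.1 + t * (b.1 - a.1), a.2 + t * (b.2 - a.2))%R.

Definition line_coord (a b x : pt) : R :=
  if Req_EM_T (b.1 - a.1) 0 then ((x.2 - a.2) / (b.2 - a.2))%R
  else ((x.1 - a.1) / (b.1 - a.1))%R.

Lemma along_line_coord (a b x : pt) : a <> b -> wedge a b a x = 0%R ->
  x = along a b (line_coord a b x).
Proof.
case: x => x1 x2 /sub_pt_neq0 hab; rewrite /wedge /along /line_coord /= => w.
case: Req_EM_T => [h1|h1] /=; f_equal.
- have : ((b.2 - a.2) * (x1 - a.1) = 0)%R by rewrite h1 in w; lra.
  by case/Rmult_integral => [|?]; [case: hab | rewrite h1; lra].
- by field; case: hab.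
- by field.
- by apply: (Rmult_eq_reg_l (b.1 - a.1)) => //; field_simplify => //; lra.
Qed.

Lemma line_coord_id (a b : pt) : line_coord a b a = 0%R.
Proof. by rewrite /line_coord; case: Req_EM_T => _ /=; rewrite Rminus_diag /Rdiv Rmult_0_l. Qed.

Lemma along_along (a b : pt) (s t : R) :
  along a (along a b t) s = along a b (s * t).
Proof. by rewrite /along /=; f_equal; ring. Qed.

Lemma collinear_on_seg (x y z : pt) : x <> y -> x <> z -> y <> z ->
  wedge x y x z = 0%R -> on_seg x y z \/ on_seg x z y \/ on_seg y z x.
Proof.
move=> hxy hxz hyz /(along_line_coord hxy) zE; rewrite {}zE in hxz hyz *.
move: (line_coord x y z) hxz hyz => l.
case: x y hxy => [x1 x2] [y1 y2]; rewrite /along /= => hxy hxz hyz.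
have l0 : l <> 0%R by move=> l0; apply: hxz; f_equal; nra.
have l1 : l <> 1%R by move=> l1; apply: hyz; f_equal; nra.
case: (Rlt_le_dec 1 l) => [gt1|le1].
  right; left; exists (/ l)%R; split.
    split; first by left; apply: Rinv_0_lt_compat; lra.
    by rewrite -Rinv_1; apply: Rinv_le_contravar; lra.
  by rewrite /=; f_equal; field; lra.
case: (Rlt_le_dec 0 l) => [gt0|le0].
  by left; exists l; split => //; lra.
right; right; exists (/ (1 - l))%R; split.
  split; first by left; apply: Rinv_0_lt_compat; lra.
  by rewrite -Rinv_1; apply: Rinv_le_contravar; lra.
by rewrite /=; f_equal; field; lra.
Qed.

Lemma triangle_wedge_neq0 (x y z : pt) : x <> y -> x <> z -> y <> z ->
  ~ on_seg x y z -> ~ on_seg x z y -> ~ on_seg y z x -> wedge x y x z <> 0%R.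
Proof. by move=> hxy hxz hyz nz ny nx /(collinear_on_seg hxy hxz hyz); tauto. Qed.

Definition slope_class (a b : pt) : nat :=
  if Req_EM_T (b.1 - a.1) 0 then 0 else
  if Req_EM_T (b.2 - a.2) 0 then 1 else
  if Req_EM_T (b.1 - a.1) (b.2 - a.2) then 2 else 3.

Definition slope_dir (k : nat) : pt :=
  match k with 0 => (0, 1) | 1 => (1, 0) | 2 => (1, 1) | _ => (1, -1) end%R.

Lemma slope_class_lt4 (a b : pt) : slope_class a b < 4.
Proof. by rewrite /slope_class; do 3 case: Req_EM_T. Qed.

Lemma octilinear_slope_dir (a b : pt) : octilinear_seg a b ->
  exists s, (b.1 - a.1 = s * (slope_dir (slope_class a b)).1 /\
             b.2 - a.2 = s * (slope_dir (slope_class a b)).2)%R.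
Proof.
rewrite /octilinear_seg /slope_class => oct.
case: Req_EM_T => [h1|h1]; first by exists (b.2 - a.2)%R; rewrite /= h1; lra.
exists (b.1 - a.1)%R; case: Req_EM_T => [h2|h2] /=; first lra.
by case: Req_EM_T => [h3|h3] /=; lra.
Qed.

Lemma same_slope_class_wedge0 (a b c d : pt) :
  octilinear_seg a b -> octilinear_seg c d ->
  slope_class a b = slope_class c d -> wedge a b c d = 0%R.
Proof.
move=> /octilinear_slope_dir [s [s1 s2]] /octilinear_slope_dir [s' [s1' s2']] same.
by rewrite /wedge s1 s2 s1' s2' same; ring.
Qed.

Lemma octilinear_along (a b : pt) (t : R) :
  octilinear_seg a b -> octilinear_seg a (along a b t).
Proof.
rewrite /octilinear_seg /along /=.
have -> : (a.1 + t * (b.1 - a.1) - a.1 = t * (b.1 - a.1))%R by ring.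
have -> : (a.2 + t * (b.2 - a.2) - a.2 = t * (b.2 - a.2))%R by ring.
by case=> [->|[->|[->|->]]]; [left | right; left | right; right; left | right; right; right];
  ring.
Qed.

(* A colouring of the edges of K4 with four colours in which adjacent edges
   differ makes two of the three perfect matchings monochromatic. *)
Lemma K4_edge_colouring (ab ac ad bc bd cd : nat) :
  ab < 4 -> ac < 4 -> ad < 4 -> bc < 4 -> bd < 4 -> cd < 4 ->
  [&& ab != ac, ab != ad, ab != bc, ab != bd, ac != ad, ac != bc,
      ac != cd, ad != bd, ad != cd, bc != bd, bc != cd & bd != cd] ->
  [|| (ab == cd) && (ac == bd), (ab == cd) && (ad == bc) | (ac == bd) && (ad == bc)].
Proof.
by case: ab => [|[|[|[|//]]]] _; case: ac => [|[|[|[|//]]]] _ //=;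
   case: ad => [|[|[|[|//]]]] _ //=; case: bc => [|[|[|[|//]]]] _ //=;
   case: bd => [|[|[|[|//]]]] _ //=; case: cd => [|[|[|[|//]]]].
Qed.

Lemma parallelogram_diagonals_meet (p q r s : pt) :
  wedge p q r s = 0%R -> wedge p r q s = 0%R -> wedge p q p r <> 0%R ->
  exists x, on_seg p s x /\ on_seg q r x.
Proof.
case: p q r s => [p1 p2] [q1 q2] [r1 r2] [s1 s2]; rewrite /wedge /= => pq_rs pr_qs tri.
have [e1 e2] : (s1 = q1 + r1 - p1 /\ s2 = q2 + r2 - p2)%R.
  set D := ((q1 - p1) * (r2 - p2) - (q2 - p2) * (r1 - p1))%R in tri *.
  have E1 : (D * (s1 - q1 - r1 + p1) = (r1 - p1) * ((q1 - p1) * (s2 - r2) - (q2 - p2) * (s1 - r1))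
       - (q1 - p1) * ((r1 - p1) * (s2 - q2) - (r2 - p2) * (s1 - q1)))%R by rewrite /D; ring.
  have E2 : (D * (s2 - q2 - r2 + p2) = (r2 - p2) * ((q1 - p1) * (s2 - r2) - (q2 - p2) * (s1 - r1))
       - (q2 - p2) * ((r1 - p1) * (s2 - q2) - (r2 - p2) * (s1 - q1)))%R by rewrite /D; ring.
  rewrite pq_rs pr_qs !Rmult_0_r Rminus_0_r in E1 E2.
  by split; [case: (Rmult_integral _ _ E1) | case: (Rmult_integral _ _ E2)] => h; lra.
exists ((p1 + s1) / 2, (p2 + s2) / 2)%R.
by split; exists (/ 2)%R; (split; first lra); rewrite /=; f_equal; lra.
Qed.

Lemma octilinear_K4_crossing (a b c d : pt) :
  wedge a b a c <> 0%R -> wedge a b a d <> 0%R -> wedge a c a d <> 0%R ->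
  wedge b c b d <> 0%R ->
  octilinear_seg a b -> octilinear_seg a c -> octilinear_seg a d ->
  octilinear_seg b c -> octilinear_seg b d -> octilinear_seg c d ->
  [\/ exists x, on_seg a b x /\ on_seg c d x,
      exists x, on_seg a c x /\ on_seg b d x
    | exists x, on_seg a d x /\ on_seg b c x].
Proof.
move=> abc abd acd bcd oab oac oad obc obd ocd.
have adjacent p q r s : octilinear_seg p q -> octilinear_seg r s ->
    wedge p q r s <> 0%R -> (slope_class p q != slope_class r s).
  by move=> opq ors npqrs; apply/eqP => /(same_slope_class_wedge0 opq ors).
have := K4_edge_colouring (slope_class_lt4 a b) (slope_class_lt4 a c)
  (slope_class_lt4 a d) (slope_class_lt4 b c) (slope_class_lt4 b d) (slope_class_lt4 c d).
(* Each pair of adjacent edges spans one of the four triangles. *)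
rewrite !adjacent //; try (move=> h; first
  [ by apply: abc; rewrite -h /wedge; ring | by apply: abd; rewrite -h /wedge; ring
  | by apply: acd; rewrite -h /wedge; ring | by apply: bcd; rewrite -h /wedge; ring ]).
move=> /(_ isT) /or3P[] /andP[/eqP e1 /eqP e2].
- apply: Or33; apply: parallelogram_diagonals_meet abc.
  + exact: same_slope_class_wedge0 e1.
  + exact: same_slope_class_wedge0 e2.
- apply: Or32; apply: parallelogram_diagonals_meet abd.
  + by rewrite wedge_revr (same_slope_class_wedge0 oab ocd e1) Ropp_0.
  + exact: same_slope_class_wedge0 e2.
- apply: Or31; apply: parallelogram_diagonals_meet acd.
  + by rewrite wedge_revr (same_slope_class_wedge0 oac obd e1) Ropp_0.
  + by rewrite wedge_revr (same_slope_class_wedge0 oad obc e2) Ropp_0.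
Qed.

(** * Bendless polylines *)

Definition between (x y z : R) : Prop := (x <= y <= z \/ z <= y <= x)%R.

Lemma on_seg_along (a b : pt) (s y u : R) : between s y u ->
  on_seg (along a b s) (along a b u) (along a b y).
Proof.
case: (Req_dec s u) => [<-|neq] syu.
  have -> : y = s by case: syu => ?; lra.
  by exists 0%R; split; [lra | rewrite /along /=; f_equal; ring].
exists ((y - s) / (u - s))%R; split; last by rewrite /along /=; f_equal; field; lra.
have ht : ((y - s) / (u - s) * (u - s) = y - s)%R by field; lra.
move: ht; set t := ((y - s) / (u - s))%R => ht.
by case: syu => ?; split; nra.
Qed.

Lemma between_consecutive (t : nat -> R) (m : nat) (y : R) :
  between (t 0) y (t m.+1) -> exists2 i, i <= m & between (t i) y (t i.+1).
Proof.
elim: m => [|m IH] h; first by exists 0.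
case: (Rle_lt_dec (t m.+1) y) => [le|lt].
- case: (Rle_lt_dec y (t m.+2)) => [le'|lt']; first by exists m.+1; last left.
  have [|i ??] := IH; first by case: h => ?; [right | right]; lra.
  by exists i; first exact: leqW.
- case: (Rle_lt_dec (t m.+2) y) => [le'|lt']; first by exists m.+1; last (right; lra).
  have [|i ??] := IH; first by case: h => ?; [left | left]; lra.
  by exists i; first exact: leqW.
Qed.

Lemma bends0_joints (p : seq pt) : bends p = 0 -> forall i, i.+2 < size p ->
  wedge (pnth p i) (pnth p i.+1) (pnth p i.+1) (pnth p i.+2) = 0%R.
Proof.
move=> hb i hi.
have nobend : {in iota 1 (size p).-2, forall j,
    ~~ is_bend (pnth p j.-1) (pnth p j) (pnth p j.+1)}.
  by apply/hasPn; rewrite has_count -/(bends p) hb.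
have /nobend : i.+1 \in iota 1 (size p).-2 by rewrite mem_iota; lia.
by rewrite /is_bend /wedge; case: Req_EM_T.
Qed.

Lemma bendless_polyline_straight (p : seq pt) : 1 < size p ->
  (forall i, i.+1 < size p -> pnth p i <> pnth p i.+1) -> bends p = 0 ->
  (forall i, i.+1 < size p -> octilinear_seg (pnth p i) (pnth p i.+1)) ->
  octilinear_seg (pnth p 0) (pnth p (size p).-1) /\
  forall x, on_seg (pnth p 0) (pnth p (size p).-1) x -> on_polyline p x.
Proof.
move=> p2 nondeg /bends0_joints joint oct.
set a := pnth p 0; set b := pnth p 1.
have ab : a <> b by exact: nondeg 0 p2.
have par i : i.+1 < size p -> wedge a b (pnth p i) (pnth p i.+1) = 0%R.
  elim: i => [|i IH] hi; first by rewrite /wedge /a /b; ring.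
  by apply: wedge_trans (nondeg i _) (IH _) (joint i hi); lia.
have col i : i < size p -> wedge a b a (pnth p i) = 0%R.
  elim: i => [|i IH] hi; first by rewrite /wedge /a; ring.
  by rewrite -(wedge_addr _ _ _ (pnth p i)) IH ?par //; [ring | lia].
pose t i := line_coord a b (pnth p i).
have onl i : i < size p -> pnth p i = along a b (t i).
  by move=> hi; exact: along_line_coord (col i hi).
have -> : (size p).-1 = (size p).-2.+1 by lia.
have lastP := onl (size p).-2.+1 ltac:(lia).
split; first by rewrite lastP; exact: octilinear_along (oct 0 p2).
move=> _ [s [hs ->]]; change (on_polyline p (along a (pnth p (size p).-2.+1) s)).
rewrite lastP along_along.
have [|i im between_i] := @between_consecutive t (size p).-2 (s * t (size p).-2.+1).
  rewrite /between [t 0]line_coord_id.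
  by case: (Rle_lt_dec 0 (t (size p).-2.+1)) => h; [left | right]; nra.
exists i; split; first lia.
by rewrite !onl; [exact: on_seg_along | lia | lia].
Qed.

(** * Bendless edges of planar octilinear drawings *)

Lemma is_edge_neq (n : nat) (e : rel 'I_n) (u v : 'I_n) : is_edge e u v -> u <> v.
Proof. by case/andP=> + _ uv; rewrite uv ltnn. Qed.

Section BendlessEdges.

Variables (n : nat) (e : rel 'I_n) (d : drawing n).
Hypothesis planar_oct : planar_octilinear_drawing e d.

Lemma bendless_edge_straight (u v : 'I_n) : is_edge e u v -> edge_bends d u v = 0 ->
  octilinear_seg (pos d u) (pos d v) /\
  forall x, on_seg (pos d u) (pos d v) x -> on_polyline (edge_poly d u v) x.
Proof.
case: planar_oct => -[_ [simple _]] [_ oct] uv b0.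
have size_poly : size (edge_poly d u v) = (size (route d u v)).+2.
  by rewrite /edge_poly /= size_cat addn1.
have last_poly : pnth (edge_poly d u v) (size (edge_poly d u v)).-1 = pos d v.
  by rewrite size_poly /pnth /= nth_cat ltnn subnn.
rewrite -last_poly; apply: bendless_polyline_straight b0 (oct u v uv).
- by rewrite size_poly.
- exact: (simple u v uv).1.
Qed.

Lemma bendless_edge_avoids_vertex (u v w : 'I_n) :
  is_edge e u v -> edge_bends d u v = 0 -> w <> u -> w <> v ->
  ~ on_seg (pos d u) (pos d v) (pos d w).
Proof.
move=> uv b0 wu wv /(bendless_edge_straight uv b0).2.
by case: planar_oct => -[_ [_ [avoid _]]] _; exact: avoid.
Qed.

Lemma bendless_edges_disjoint (u v u' v' : 'I_n) :
  is_edge e u v -> is_edge e u' v' -> edge_bends d u v = 0 -> edge_bends d u' v' = 0 ->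
  u <> u' -> u <> v' -> v <> u' -> v <> v' ->
  ~ exists x, on_seg (pos d u) (pos d v) x /\ on_seg (pos d u') (pos d v') x.
Proof.
move=> uv uv' b0 b0' uu' uv'' vu' vv' [x [on1 on2]].
case: planar_oct => -[_ [_ [_ cross]]] _.
have [w [[]-> [[] ? _]]] := cross u v u' v' x uv uv' (fun h => uu' (congr1 fst h))
  ((bendless_edge_straight uv b0).2 x on1) ((bendless_edge_straight uv' b0').2 x on2); done.
Qed.

Lemma bendless_triangle_wedge_neq0 (u v w : 'I_n) :
  is_edge e u v -> is_edge e u w -> is_edge e v w ->
  edge_bends d u v = 0 -> edge_bends d u w = 0 -> edge_bends d v w = 0 ->
  wedge (pos d u) (pos d v) (pos d u) (pos d w) <> 0%R.
Proof.
move=> uv uw vw b_uv b_uw b_vw.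
have [inj _] := planar_oct.1.
have nuv := is_edge_neq uv; have nuw := is_edge_neq uw; have nvw := is_edge_neq vw.
apply: (@triangle_wedge_neq0 (pos d u) (pos d v) (pos d w)).
- by move/inj/nuv.
- by move/inj/nuw.
- by move/inj/nvw.
- by apply: (bendless_edge_avoids_vertex uv b_uv) => // /esym.
- by apply: (bendless_edge_avoids_vertex uw b_uw) => // /esym.
- exact: (bendless_edge_avoids_vertex vw b_vw).
Qed.

Lemma K4_has_bend (a b c w : 'I_n) :
  is_edge e a b -> is_edge e a c -> is_edge e a w ->
  is_edge e b c -> is_edge e b w -> is_edge e c w ->
  exists x y, [/\ is_edge e x y, x \in [:: a; b; c] & 0 < edge_bends d x y].
Proof.
move=> ab ac aw bc bw cw.
case: (posnP (edge_bends d a b)) => [b_ab|]; last by exists a, b; rewrite !inE eqxx.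
case: (posnP (edge_bends d a c)) => [b_ac|]; last by exists a, c; rewrite !inE eqxx.
case: (posnP (edge_bends d a w)) => [b_aw|]; last by exists a, w; rewrite !inE eqxx.
case: (posnP (edge_bends d b c)) => [b_bc|]; last by exists b, c; rewrite !inE eqxx orbT.
case: (posnP (edge_bends d b w)) => [b_bw|]; last by exists b, w; rewrite !inE eqxx orbT.
case: (posnP (edge_bends d c w)) => [b_cw|]; last by exists c, w; rewrite !inE eqxx !orbT.
exfalso; case: (octilinear_K4_crossing
  (bendless_triangle_wedge_neq0 ab ac bc b_ab b_ac b_bc)
  (bendless_triangle_wedge_neq0 ab aw bw b_ab b_aw b_bw)
  (bendless_triangle_wedge_neq0 ac aw cw b_ac b_aw b_cw)
  (bendless_triangle_wedge_neq0 bc bw cw b_bc b_bw b_cw)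
  (bendless_edge_straight ab b_ab).1 (bendless_edge_straight ac b_ac).1
  (bendless_edge_straight aw b_aw).1 (bendless_edge_straight bc b_bc).1
  (bendless_edge_straight bw b_bw).1 (bendless_edge_straight cw b_cw).1).
- exact: (bendless_edges_disjoint ab cw b_ab b_cw (is_edge_neq ac) (is_edge_neq aw)
          (is_edge_neq bc) (is_edge_neq bw)).
- exact: (bendless_edges_disjoint ac bw b_ac b_bw (is_edge_neq ab) (is_edge_neq aw)
          (not_eq_sym (is_edge_neq bc)) (is_edge_neq cw)).
- exact: (bendless_edges_disjoint aw bc b_aw b_bc (is_edge_neq ab) (is_edge_neq ac)
          (not_eq_sym (is_edge_neq bw)) (not_eq_sym (is_edge_neq cw))).
Qed.

End BendlessEdges.

(** * Disjoint copies of K4 *)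

Definition corner_x (a : nat) : R := match a with 0 | 2 => 0 | 1 => 4 | _ => 1 end%R.
Definition corner_y (a : nat) : R := match a with 0 | 1 => 0 | 2 => 4 | _ => 1 end%R.
Definition corner (a : nat) : pt := (corner_x a, corner_y a).

(* Copy [j] of K4: the triangle (0,0), (4,0), (0,4) with the inner point (1,1),
   translated by 10 j along the x-axis. *)
Definition gadget (j a : nat) : pt := (INR j * 10 + corner_x a, corner_y a)%R.

Lemma corner_x_range (a : nat) : (0 <= corner_x a <= 4)%R.
Proof. by case: a => [|[|[|a]]] /=; lra. Qed.

Lemma on_gadget_seg_x (j a b : nat) (x : pt) : on_seg (gadget j a) (gadget j b) x ->
  (INR j * 10 <= x.1 <= INR j * 10 + 4)%R.
Proof. by case=> t [ht ->] /=; have := corner_x_range a; have := corner_x_range b; nra. Qed.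

Lemma INR_neq_gap (j j' : nat) : j <> j' -> (INR j + 1 <= INR j' \/ INR j' + 1 <= INR j)%R.
Proof.
by move=> /eqP; rewrite neq_ltn => /orP[] lt; [left | right];
  rewrite -S_INR; apply: le_INR; apply/leP.
Qed.

Lemma gadget_same_copy (j j' : nat) (x : R) :
  (INR j * 10 <= x <= INR j * 10 + 4)%R -> (INR j' * 10 <= x <= INR j' * 10 + 4)%R -> j = j'.
Proof. by move=> hj hj'; case: (Nat.eq_dec j j') => // /INR_neq_gap; lra. Qed.

Lemma gadget_cornerE (j a : nat) (x : pt) :
  (x.1 - INR j * 10, x.2)%R = corner a <-> x = gadget j a.
Proof. by case: x => x1 x2; rewrite /gadget /corner /=; split=> -[e1 e2]; f_equal; lra. Qed.

Lemma on_gadget_seg_corner (j a b : nat) (x : pt) : on_seg (gadget j a) (gadget j b) x ->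
  on_seg (corner a) (corner b) (x.1 - INR j * 10, x.2)%R.
Proof. by case=> t [ht ->]; exists t; split => //=; f_equal; ring. Qed.

Lemma corner_on_seg (a b c : nat) : a < b < 4 -> c < 4 ->
  on_seg (corner a) (corner b) (corner c) -> c = a \/ c = b.
Proof.
case/andP=> ab b4 c4 [t [ht [ex ey]]].
by case: a b c ab b4 c4 ex ey => [|[|[|[|a]]]] [|[|[|[|b]]]] [|[|[|[|c]]]] //= *;
  try (by left); try (by right); exfalso; nra.
Qed.

Lemma corner_segs_meet (a b a' b' : nat) (x : pt) : a < b < 4 -> a' < b' < 4 ->
  (a, b) <> (a', b') ->
  on_seg (corner a) (corner b) x -> on_seg (corner a') (corner b') x ->
  (x = corner a /\ (a = a' \/ a = b')) \/ (x = corner b /\ (b = a' \/ b = b')).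
Proof.
case/andP=> ab b4 /andP[ab' b4'] neq [t [ht ->]] [s [hs [ex ey]]].
move: ab b4 ab' b4' neq ex ey.
case: a b a' b' => [|[|[|[|a]]]] [|[|[|[|b]]]] [|[|[|[|a']]]] [|[|[|[|b']]]] //= *;
  rewrite /corner /=; first [ by exfalso
        | by left; split; [f_equal; nra | by [left | right]]
        | by right; split; [f_equal; nra | by [left | right]]
        | exfalso; nra ].
Qed.

Lemma gadget_inj (j j' a a' : nat) : a < 4 -> a' < 4 ->
  gadget j a = gadget j' a' -> j = j' /\ a = a'.
Proof.
move=> ha ha' [ex ey].
have jj' : j = j'.
  apply: (gadget_same_copy (x := (INR j * 10 + corner_x a)%R)); rewrite ?ex;
  by have := corner_x_range a; have := corner_x_range a'; lra.
subst j'; split => //; have {}ex : corner_x a = corner_x a' by lra.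
by case: a ha ex ey => [|[|[|[|]]]] // _; case: a' ha' => [|[|[|[|]]]] // _ /=; lra.
Qed.

Lemma gadget_on_seg (j j' a b c : nat) : a < b < 4 -> c < 4 ->
  on_seg (gadget j a) (gadget j b) (gadget j' c) -> j' = j /\ (c = a \/ c = b).
Proof.
move=> ab c4 on_ab.
have jj : j = j'.
  apply: gadget_same_copy (on_gadget_seg_x on_ab) _.
  by rewrite /=; have := corner_x_range c; lra.
subst j'; split => //; apply: corner_on_seg ab c4 _.
by rewrite -((gadget_cornerE j c _).2 erefl); exact: on_gadget_seg_corner.
Qed.

Lemma gadget_segs_meet (j j' a b a' b' : nat) (x : pt) : a < b < 4 -> a' < b' < 4 ->
  (j, a, b) <> (j', a', b') ->
  on_seg (gadget j a) (gadget j b) x -> on_seg (gadget j' a') (gadget j' b') x ->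
  j = j' /\ ((x = gadget j a /\ (a = a' \/ a = b')) \/ (x = gadget j b /\ (b = a' \/ b = b'))).
Proof.
move=> ab ab' neq on1 on2.
have jj := gadget_same_copy (on_gadget_seg_x on1) (on_gadget_seg_x on2).
subst j'; split => //.
have neq' : (a, b) <> (a', b') by case=> aa bb; apply: neq; rewrite aa bb.
by case: (corner_segs_meet ab ab' neq' (on_gadget_seg_corner on1) (on_gadget_seg_corner on2))
  => -[/gadget_cornerE -> ?]; [left | right].
Qed.

Definition block_drawing (n : nat) : drawing n :=
  Drawing (fun u : 'I_n => gadget (u %/ 4) (u %% 4)) (fun _ _ => [::]).

Lemma on_polyline_pair (a b x : pt) : on_polyline [:: a; b] x -> on_seg a b x.
Proof. by case=> [[|i]] []. Qed.

Lemma ord_divmod4_inj (n : nat) (u v : 'I_n) :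
  u %/ 4 = v %/ 4 -> u %% 4 = v %% 4 -> u = v.
Proof. by move=> q r; apply: val_inj; rewrite /= (divn_eq u 4) (divn_eq v 4) q r. Qed.

Lemma block_drawing_planar (n : nat) (e : rel 'I_n) :
  (forall u v, e u v -> u %/ 4 = v %/ 4) -> planar_drawing e (block_drawing n).
Proof.
move=> in_block.
have edge_in_block u v : is_edge e u v -> u %/ 4 = v %/ 4 /\ u %% 4 < v %% 4 < 4.
  by case/andP=> uv /in_block same; split => //; lia.
have inj : injective (pos (block_drawing n)).
  by move=> u v /gadget_inj [] //; [lia | lia | exact: ord_divmod4_inj].
split; first exact: inj.
split.
  move=> u v uv; split=> [[|[|i]] //= _|i j x ij]; last by rewrite /edge_poly /=; lia.
  by move/inj; exact: is_edge_neq uv.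
split.
  move=> u v w uv wu wv /on_polyline_pair.
  have [same uv4] := edge_in_block u v uv; rewrite /= same.
  case/gadget_on_seg => [//|| wv4 [wu4|wv4']]; first lia.
  - by apply: wu; apply: ord_divmod4_inj; rewrite // wv4 same.
  - by apply: wv; apply: ord_divmod4_inj.
move=> u v u' v' x uv uv' neq /on_polyline_pair on1 /on_polyline_pair on2.
have [same uv4] := edge_in_block u v uv; have [same' uv4'] := edge_in_block u' v' uv'.
rewrite /= same in on1; rewrite /= same' in on2.
have neq3 : (v %/ 4, u %% 4, v %% 4) <> (v' %/ 4, u' %% 4, v' %% 4).
  case=> vv' uu' vv4; apply: neq.
  have -> : u = u' by apply: ord_divmod4_inj uu'; rewrite same vv' same'.
  by rewrite (ord_divmod4_inj vv' vv4).
have [vv' [[xE eq]|[xE eq]]] := gadget_segs_meet uv4 uv4' neq3 on1 on2.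
- exists u; split; [by left | split; last by rewrite xE /= same].
  by case: eq => e4; [left | right]; apply: ord_divmod4_inj e4; rewrite ?same ?same' vv'.
- exists v; split; [by right | split => //].
  by case: eq => e4; [left | right]; apply: ord_divmod4_inj e4; rewrite ?same' vv'.
Qed.

Lemma block_graph_deg_le4 (n : nat) (e : rel 'I_n) :
  (forall u v, e u v -> u %/ 4 = v %/ 4) -> forall u, deg e u <= 4.
Proof.
move=> in_block u; rewrite /deg.
pose rem4 (v : 'I_n) : 'I_4 := inord (v %% 4).
have inj : {in [set v | e u v] &, injective rem4}.
  move=> v w; rewrite !inE => /in_block uv /in_block uw /(congr1 val) /=.
  by rewrite !inordK ?ltn_pmod //; apply: ord_divmod4_inj; rewrite -uv -uw.
by rewrite -(card_in_imset inj); apply: leq_trans (max_card _) _; rewrite card_ord.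
Qed.

Definition K4_copies (n : nat) (e : rel 'I_n) : Prop :=
  exists k, n = 4 * k.+1 /\ forall u v : 'I_n, e u v = (u %/ 4 == v %/ 4) && (u != v).

Lemma K4_copies_in_block (n : nat) (e : rel 'I_n) : K4_copies e ->
  forall u v, e u v -> u %/ 4 = v %/ 4.
Proof. by case=> k [_ eE] u v; rewrite eE => /andP[/eqP]. Qed.

Lemma K4_copies_simple (n : nat) (e : rel 'I_n) : K4_copies e -> simple_graph e.
Proof.
case=> k [_ eE]; split=> [u v|u]; rewrite !eE ?eqxx ?andbF //.
by rewrite eq_sym [v == u]eq_sym.
Qed.

Lemma K4_copies_4planar (n : nat) (e : rel 'I_n) : K4_copies e -> k_planar 4 e.
Proof.
move=> /K4_copies_in_block in_block; split; last exact: block_graph_deg_le4.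
by exists (block_drawing n); exact: block_drawing_planar.
Qed.

Section BendsOfK4Copies.

Variables (n : nat) (e : rel 'I_n) (d : drawing n).
Hypotheses (copies : K4_copies e) (planar_oct : planar_octilinear_drawing e d).

Lemma K4_copy_has_bend (j : nat) : j < n %/ 4 ->
  exists x y, [/\ is_edge e x y, x %/ 4 = j & 0 < edge_bends d x y].
Proof.
case: copies => k [nE eE] jn.
have vertex i : i < 4 -> {x : 'I_n | x = 4 * j + i :> nat}.
  by move=> i4; exists (@Ordinal n (4 * j + i) ltac:(lia)).
have [a aE] := vertex 0 isT; have [b bE] := vertex 1 isT.
have [c cE] := vertex 2 isT; have [w wE] := vertex 3 isT.
have edge (x y : 'I_n) i i' : x = 4 * j + i :> nat -> y = 4 * j + i' :> nat -> i < i' < 4 ->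
    is_edge e x y.
  by move=> xE yE ii'; rewrite /is_edge eE -val_eqE /= xE yE; lia.
have [x [y [xy + bend]]] := K4_has_bend planar_oct (edge a b 0 1 aE bE isT)
  (edge a c 0 2 aE cE isT) (edge a w 0 3 aE wE isT) (edge b c 1 2 bE cE isT)
  (edge b w 1 3 bE wE isT) (edge c w 2 3 cE wE isT).
by rewrite !inE => /or3P[] /eqP xE; exists x, y; split => //; rewrite xE ?aE ?bE ?cE; lia.
Qed.

Lemma K4_copies_total_bends : n <= 4 * total_bends e d.
Proof.
have [k [nE _]] := copies.
suff : k.+1 <= total_bends e d by lia.
rewrite /total_bends (partition_big (fun u : 'I_n => inord (u %/ 4) : 'I_k.+1) predT) //=.
apply: (@leq_trans (\sum_(j < k.+1) 1)); first by rewrite sum1_card card_ord.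
apply: leq_sum => j _.
have [|x [y [xy xj bend]]] := @K4_copy_has_bend j; first by have := ltn_ord j; lia.
rewrite (bigD1 x) /=; last by apply/eqP/val_inj; rewrite /= xj inordK.
by rewrite (bigD1 y) //= -addnA; apply: leq_trans (leq_addr _ _).
Qed.

End BendsOfK4Copies.

Theorem mainTheorem4 :
  exists C : forall n : nat, rel 'I_n -> Prop,
    (forall n (e : rel 'I_n), C n e -> simple_graph e /\ k_planar 4 e) /\
    (forall N : nat, exists n (e : rel 'I_n), N <= n /\ C n e) /\
    (forall n (e : rel 'I_n), C n e ->
       ~ exists d : drawing n, planar_octilinear_drawing e d /\ total_bends e d = 0) /\
    (exists (c : R) (n0 : nat), (0 < c)%R /\
       forall n (e : rel 'I_n) (d : drawing n), C n e -> n0 <= n ->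
         planar_octilinear_drawing e d ->
         (forall u v, is_edge e u v -> edge_bends d u v <= 1) ->
         (c * INR n <= INR (total_bends e d))%R).
Proof.
exists K4_copies; split; [|split; [|split]].
- by move=> n e copies; split; [exact: K4_copies_simple | exact: K4_copies_4planar].
- move=> N; exists (4 * N.+1), (fun u v => (u %/ 4 == v %/ 4) && (u != v)).
  by split; [lia | exists N].
- move=> n e copies [d [planar_oct no_bends]].
  have := K4_copies_total_bends copies planar_oct; rewrite no_bends.
  by case: copies => k [nE _]; lia.
(* The lower bound holds without the one-bend restriction. *)
- exists (/ 4)%R, 0; split=> [|n e d copies _ planar_oct _]; first lra.
  have /leP/le_INR := K4_copies_total_bends copies planar_oct.
  by rewrite mult_INR /=; lra.
Qed.
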